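(* Let $\mathbf{A}\in\{0,1\}^{m\times n}$ be the bi-adjacency matrix of a $(2,d,\epsilon)$-expander with $\epsilon\le 1/4$. Let $\mathbf{x},\mathbf{x}'\in\mathbb{R}^n$ satisfy $\mathbf{A}\mathbf{x}=\mathbf{A}\mathbf{x}'$ and $\|\mathbf{x}'\|_1\le\|\mathbf{x}\|_1$. Let $S=\{s\}$ where $s$ is an index of a largest-in-magnitude entry of $\mathbf{x}$. Then $$\|\mathbf{x}'-\mathbf{x}\|_1\le f(\epsilon)\,\|\mathbf{x}_{S^c}\|_1,\qquad f(\epsilon)=\frac{2(1+2\epsilon)}{1-2\epsilon}.$$
   Context: A bipartite graph $G(X,Y,H)$ has vertex classes $X$ (left) and $Y$ (right) and edge set $H\subset X\times Y$. Its bi-adjacency matrix is the $|Y|\times|X|$ $0/1$ matrix whose column $j$ corresponds to left vertex $j$, row $i$ to right vertex $i$, with entry $1$ iff adjacent. A left $d$-regular bipartite graph (every left vertex has degree $d$) is a $(\phi,d,\epsilon)$-expander if every $\Phi\subset X$ with $|\Phi|\le\phi$ satisfies $|N(\Phi)|\ge(1-\epsilon)d|\Phi|$, where $N(\Phi)$ is the set of neighbours of $\Phi$. For $S\subset\{1,\dots,n\}$, $\mathbf{x}_S\in\mathbb{R}^n$ agrees with $\mathbf{x}$ on $S$ and is $0$ elsewhere; $S^c$ is the complement. *)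

(* the statement is purely algebraic/order-theoretic over the
   reals, so we state it for an arbitrary real field R. *)
From HB Require Import structures.
From mathcomp Require Import all_boot all_order all_algebra.
Set Implicit Arguments. Unset Strict Implicit. Unset Printing Implicit Defensive.
Import Order.TTheory GRing.Theory Num.Theory.
Local Open Scope ring_scope.

(* Bi-adjacency matrix A : 'M_(m, n): column j = left vertex j ('I_n),
   row i = right vertex i ('I_m).  Entries are 0/1. *)
Definition is01 (R : ringType) m n (A : 'M[R]_(m, n)) : Prop :=
  forall i j, A i j = 0 \/ A i j = 1.

Definition nbhd (R : ringType) m n (A : 'M[R]_(m, n)) (Phi : {set 'I_n})
  : {set 'I_m} := [set i | [exists j in Phi, A i j != 0]].

Definition left_regular (R : ringType) m n (A : 'M[R]_(m, n)) (d : nat) : Prop :=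
  forall j : 'I_n, #|nbhd A [set j]| = d.

Definition expander (R : realFieldType) m n (A : 'M[R]_(m, n))
  (phi d : nat) (eps : R) : Prop :=
  left_regular A d /\
  forall Phi : {set 'I_n}, (#|Phi| <= phi)%N ->
    (1 - eps) * d%:R * (#|Phi|)%:R <= (#|nbhd A Phi|)%:R.

Definition norm1 (R : realFieldType) n (x : 'cV[R]_n) : R :=
  \sum_(j < n) `|x j 0|.

Definition restr (R : ringType) n (x : 'cV[R]_n) (S : {set 'I_n}) : 'cV[R]_n :=
  \col_j (if j \in S then x j 0 else 0).

Definition fexp (R : realFieldType) (eps : R) : R :=
  2 * (1 + 2 * eps) / (1 - 2 * eps).

From HB Require Import structures.
From mathcomp Require Import all_boot all_order all_algebra.
From mathcomp Require Import lra.

Set Implicit Arguments.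
Unset Strict Implicit.
Unset Printing Implicit Defensive.
Import Order.TTheory GRing.Theory Num.Theory.
Local Open Scope ring_scope.

(* Put h := x' - x, so that A h = 0 and x' = x + h.
   1. Null space property for singletons: every h in the kernel of the
      bi-adjacency matrix A of a (2,d,eps)-expander satisfies
      |h_s| <= 2 eps ||h_{S^c}||_1 for S = {s}.  Each of the d rows i in N(s)
      gives |h_s| <= sum_{j <> s, i in N(j)} |h_j|; summing over N(s) and
      exchanging the sums, each j <> s is counted |N(s) :&: N(j)| times, which
      expansion of the pair {s, j} bounds by 2 eps d.
   2. Robust recovery from the null space property (valid for any set S and
      constant 0 <= c < 1): if ||h_S|| <= c ||h_{S^c}|| and ||x + h|| <= ||x||
      then ||h|| <= 2(1+c)/(1-c) ||x_{S^c}||, by splitting every l1 norm along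
      S and S^c and using the reverse triangle inequality on each part.
   The theorem is step 2 with c = 2 eps, whose hypotheses are supplied by
   step 1 and by eps <= 1/4; that the expander constant is nonnegative
   comes from the expansion of a single vertex. *)

Section L1Norm.
Variables (R : realFieldType) (n : nat).
Implicit Types (u v : 'cV[R]_n) (S : {set 'I_n}).

Lemma norm1_ge0 v : 0 <= norm1 v.
Proof. exact: sumr_ge0. Qed.

Lemma norm1_lerB u v : norm1 u - norm1 v <= norm1 (u + v).
Proof.
rewrite /norm1 -sumrB; apply: ler_sum => j _.
by rewrite mxE lerB_normD.
Qed.

Lemma restrD u v S : restr (u + v) S = restr u S + restr v S.
Proof.
by apply/matrixP => i j; rewrite !mxE; case: (i \in S); rewrite ?addr0.
Qed.

Lemma norm1_restr v S : norm1 (restr v S) = \sum_(j in S) `|v j 0|.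
Proof.
rewrite /norm1 [RHS]big_mkcond; apply: eq_bigr => j _.
by rewrite mxE; case: (j \in S); rewrite ?normr0.
Qed.

Lemma norm1_split v S : norm1 v = norm1 (restr v S) + norm1 (restr v (~: S)).
Proof.
rewrite !norm1_restr /norm1 (bigID (mem S)) /=.
by congr (_ + _); apply: eq_bigl => j; rewrite inE.
Qed.

Lemma nsp_l1_stability (x h : 'cV[R]_n) S (c : R) :
  0 <= c < 1 ->
  norm1 (restr h S) <= c * norm1 (restr h (~: S)) ->
  norm1 (x + h) <= norm1 x ->
  norm1 h <= 2 * (1 + c) / (1 - c) * norm1 (restr x (~: S)).
Proof.
case/andP=> c0 c1 nsp decr.
rewrite (norm1_split x S) (norm1_split (x + h) S) !restrD in decr.
have tS := norm1_lerB (restr x S) (restr h S).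
have tSc := norm1_lerB (restr h (~: S)) (restr x (~: S)).
rewrite [restr h _ + _]addrC in tSc.
have hS0 := norm1_ge0 (restr h S); have hSc0 := norm1_ge0 (restr h (~: S)).
have tail : (1 - c) * norm1 (restr h (~: S)) <= 2 * norm1 (restr x (~: S)).
  by lra.
rewrite (norm1_split h S) mulrAC ler_pdivlMr ?subr_gt0 //.
have : 0 <= (1 - c) * (c * norm1 (restr h (~: S)) - norm1 (restr h S)).
  by rewrite mulr_ge0 ?subr_ge0 // ltW.
have : 0 <= (1 + c) * (2 * norm1 (restr x (~: S))
                      - (1 - c) * norm1 (restr h (~: S))).
  by rewrite mulr_ge0 ?subr_ge0 //; lra.
nra.
Qed.

End L1Norm.

Section Neighbourhoods.
Variables (R : ringType) (m n : nat) (A : 'M[R]_(m, n)).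

Lemma mem_nbhd1 i j : (i \in nbhd A [set j]) = (A i j != 0).
Proof.
rewrite inE; apply/existsP/idP => [[k /andP[] /[!inE] /eqP -> //]|Aij].
by exists j; rewrite inE eqxx.
Qed.

Lemma nbhd_set2 j k : nbhd A [set j; k] = nbhd A [set j] :|: nbhd A [set k].
Proof.
apply/setP => i; rewrite in_setU !mem_nbhd1 inE.
apply/existsP/orP => [[l /andP[] /[!inE] /orP[] /eqP -> ->]|[] Aik]; auto.
  by exists j; rewrite !inE eqxx Aik.
by exists k; rewrite !inE eqxx orbT Aik.
Qed.

End Neighbourhoods.

Lemma sum_nbhd_indicator (R : numDomainType) (m n : nat) (A : 'M[R]_(m, n))
    s j :
  \sum_(i in nbhd A [set s]) ((A i j != 0)%:R : R)
    = #|nbhd A [set s] :&: nbhd A [set j]|%:R.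
Proof.
rewrite (eq_bigr (fun i => if A i j != 0 then 1 else 0)); last first.
  by move=> i _; case: (_ != 0).
rewrite -big_mkcondr /= sumr_const; congr (_ *+ _).
by apply: eq_card => i; rewrite in_setI !mem_nbhd1 unfold_in /= mem_nbhd1.
Qed.

Section Expansion.
Variables (R : realFieldType) (m n : nat) (A : 'M[R]_(m, n)).
Variables (phi d : nat) (eps : R).
Hypothesis expA : expander A phi d eps.

(* A single left vertex has exactly d neighbours, so eps cannot be negative. *)
Lemma expander_eps_ge0 (j : 'I_n) : (0 < phi)%N -> (0 < d)%N -> 0 <= eps.
Proof.
move=> phi0 d0; case: expA => reg expand.
have := expand [set j]; rewrite cards1 reg mulr1 => /(_ phi0).
rewrite -[leRHS]mul1r ler_pM2r ?ltr0n //; lra.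
Qed.

Lemma common_nbhd_bound j k : (2 <= phi)%N -> j != k ->
  #|nbhd A [set j] :&: nbhd A [set k]|%:R <= 2 * eps * d%:R.
Proof.
move=> phi2 jk; case: expA => reg expand.
have := expand [set j; k]; rewrite cards2 jk /= nbhd_set2 => /(_ phi2).
have := cardsUI (nbhd A [set j]) (nbhd A [set k]).
rewrite !reg => /(congr1 (fun p : nat => p%:R : R)); rewrite !natrD.
lra.
Qed.

End Expansion.

Section ExpanderKernel.
Variables (R : realFieldType) (m n d : nat) (A : 'M[R]_(m, n)) (eps : R).
Hypothesis A01 : is01 A.

Lemma norm_entry i j : `|A i j| = (A i j != 0)%:R.
Proof. by case: (A01 i j) => ->; rewrite ?normr0 ?normr1 ?eqxx ?oner_eq0. Qed.

Lemma row_kernel_bound (h : 'cV[R]_n) s i : A *m h = 0 -> A i s != 0 ->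
  `|h s 0| <= \sum_(j | j != s) (A i j != 0)%:R * `|h j 0|.
Proof.
move=> Ah Ais.
have rowi : (A *m h) i 0 = 0 by rewrite Ah mxE.
have Ais1 : A i s = 1 by case: (A01 i s) Ais => ->; rewrite ?eqxx.
rewrite mxE (bigD1 s) //= Ais1 mul1r in rowi.
have -> : h s 0 = - \sum_(j | j != s) A i j * h j 0.
  by apply/eqP; rewrite -subr_eq0 opprK rowi.
rewrite normrN; apply: le_trans (ler_norm_sum _ _ _) _.
by apply: ler_sum => j _; rewrite normrM norm_entry.
Qed.

Hypothesis expA : expander A 2 d eps.

Lemma kernel_singleton_nsp (h : 'cV[R]_n) s : (0 < d)%N -> A *m h = 0 ->
  norm1 (restr h [set s]) <= 2 * eps * norm1 (restr h (~: [set s])).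
Proof.
move=> d0 Ah; have [reg _] := expA.
rewrite !norm1_restr big_set1.
have -> : \sum_(j in ~: [set s]) `|h j 0| = \sum_(j | j != s) `|h j 0|.
  by apply: eq_bigl => j; rewrite !inE.
have rows : d%:R * `|h s 0| <=
    \sum_(j | j != s) \sum_(i in nbhd A [set s]) (A i j != 0)%:R * `|h j 0|.
  rewrite -exchange_big /= -(reg s) mulr_natl -sumr_const.
  by apply: ler_sum => i; rewrite mem_nbhd1 => Ais; apply: row_kernel_bound.
have overlap : \sum_(j | j != s) \sum_(i in nbhd A [set s])
      ((A i j != 0)%:R : R) * `|h j 0|
    <= \sum_(j | j != s) 2 * eps * d%:R * `|h j 0|.
  apply: ler_sum => j js; rewrite -mulr_suml sum_nbhd_indicator.
  by apply: ler_wpM2r => //; rewrite (common_nbhd_bound expA) // eq_sym.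
have d_gt0 : 0 < d%:R :> R by rewrite ltr0n.
rewrite -(ler_pM2l d_gt0); apply: le_trans (le_trans rows overlap) _.
by rewrite -mulr_sumr mulrCA mulrA.
Qed.

End ExpanderKernel.

Unset Implicit Arguments.

Theorem theorem2 (R : realFieldType) (m n d : nat) (A : 'M[R]_(m, n))
  (eps : R) (x x' : 'cV[R]_n) (s : 'I_n) :
  is01 A -> (0 < d)%N -> expander A 2 d eps -> eps <= 1 / 4 ->
  A *m x = A *m x' -> norm1 x' <= norm1 x ->
  (forall j : 'I_n, `|x j 0| <= `|x s 0|) ->
  norm1 (x' - x) <= fexp eps * norm1 (restr x (~: [set s])).
Proof.
move=> A01 d0 expA eps_small Axx' decr _.
have Ah : A *m (x' - x) = 0 by rewrite mulmxBr Axx' subrr.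
have eps0 : 0 <= eps by apply: (expander_eps_ge0 expA s).
have c_range : 0 <= 2 * eps < 1 by apply/andP; split; lra.
have nsp := kernel_singleton_nsp A01 expA s d0 Ah.
have := nsp_l1_stability (x := x) c_range nsp.
by rewrite addrCA subrr addr0; apply.
Qed.
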